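(* Let $\mathcal{D}=(\mathcal{V},\mathcal{E})$ be a simple digraph with $\mathcal{V}=\{1,\ldots,n\}$, $n\ge 2$, and let $L$ be its Laplacian matrix. Then $r_{\max}(\mathcal{D})$ equals the optimal value of the mixed integer linear program $$\min_{t,\,b}\ t \quad\text{subject to}\quad t\in\mathbb{R},\ b\in\mathbb{Z}^{2n},\ 0\le t,\ \begin{bmatrix}L&0\\0&L\end{bmatrix} b\le t\begin{bmatrix}\mathbf 1_n\\ \mathbf 1_n\end{bmatrix},\ 0\le b\le \mathbf 1_{2n},\ \begin{bmatrix}I_n & I_n\end{bmatrix} b\le \mathbf 1_n,$$ $$1\le \begin{bmatrix}\mathbf 1_n^T & 0\end{bmatrix} b\le n-1,\qquad 1\le \begin{bmatrix}0 & \mathbf 1_n^T\end{bmatrix} b\le n-1,$$ where all vector inequalities are componentwise and $I_n$ is the $n\times n$ identity.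
   Context: A simple digraph has no self-loops and at most one directed edge $(i,j)$ from $i$ to $j$. For $j\in\mathcal{V}$, $\mathcal{N}_j=\{i\in\mathcal{V}:(i,j)\in\mathcal{E}\}$ is the set of in-neighbors of $j$. The Laplacian $L\in\mathbb{R}^{n\times n}$ has entries $L_{j,j}=|\mathcal{N}_j|$, $L_{j,i}=-1$ if $i\neq j$ and $i\in\mathcal{N}_j$, and $L_{j,i}=0$ if $i\ne j$ and $i\notin\mathcal{N}_j$. For $r\in\mathbb{Z}_{\ge 0}$, a nonempty subset $S\subseteq\mathcal{V}$ is $r$-reachable if there exists $i\in S$ with $|\mathcal{N}_i\setminus S|\ge r$. A digraph on $n\ge 2$ nodes is $r$-robust if for every pair of nonempty, disjoint subsets of $\mathcal{V}$, at least one of them is $r$-reachable. $r_{\max}(\mathcal{D})$ denotes the largest integer $r\ge 0$ for which $\mathcal{D}$ is $r$-robust. $\mathbf 1_m$ is the all-ones vector of length $m$ and $0$ denotes zero blocks of appropriate size. *)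

From HB Require Import structures.
From mathcomp Require Import all_boot all_order all_algebra.
Set Implicit Arguments. Unset Strict Implicit. Unset Printing Implicit Defensive.
Import Order.TTheory GRing.Theory Num.Theory.

(* A simple digraph on V = 'I_n is an irreflexive relation e : rel 'I_n;
   e i j means there is a directed edge (i, j) from i to j. *)
Definition simple_digraph (n : nat) (e : rel 'I_n) : Prop := forall i, ~~ e i i.

Definition in_nbrs (n : nat) (e : rel 'I_n) (j : 'I_n) : {set 'I_n} :=
  [set i | e i j].

Definition r_reachable (n : nat) (e : rel 'I_n) (r : nat) (S : {set 'I_n}) : bool :=
  (S != set0) && [exists i in S, r <= #|in_nbrs e i :\: S|].

Definition r_robust (n : nat) (e : rel 'I_n) (r : nat) : bool :=
  [forall S1 : {set 'I_n}, forall S2 : {set 'I_n},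
    [&& S1 != set0, S2 != set0 & [disjoint S1 & S2]] ==>
    r_reachable e r S1 || r_reachable e r S2].

(* r_max: the largest r >= 0 with D r-robust.  Since every digraph is
   0-robust and r-robustness with r >= n is impossible for n >= 2
   (|N_i \ S| <= n - 1), the maximum may be taken over r <= n. *)
Definition r_max (n : nat) (e : rel 'I_n) : nat :=
  \max_(r < n.+1 | r_robust e r) r.

Local Open Scope ring_scope.

Definition laplacian (R : pzRingType) (n : nat) (e : rel 'I_n) : 'M[R]_n :=
  \matrix_(j < n, i < n)
    if i == j then (#|in_nbrs e j|)%:R else if e i j then -1 else 0.


Definition milp_feasible (R : realFieldType) (n : nat) (e : rel 'I_n)
    (t : R) (b : 'cV[int]_(n + n)) : Prop :=
  let L := laplacian R e in
  let bR := map_mx (fun z : int => z%:~R : R) b in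
  [/\ 0 <= t,
      (forall i, (block_mx L 0 0 L *m bR) i 0 <= t),
      (forall i, 0 <= b i 0 <= 1),
      (forall i, (row_mx 1%:M 1%:M *m b) i 0 <= 1)
    & ( 1 <= (row_mx (const_mx 1 : 'rV[int]_n) 0 *m b) 0 0 <= (n - 1)%N%:Z
      /\ 1 <= (row_mx 0 (const_mx 1 : 'rV[int]_n) *m b) 0 0 <= (n - 1)%N%:Z)].

(** A feasible [b] is a 0/1 vector, i.e. the pair of indicator vectors of two
    vertex sets [S1], [S2]; the constraint [[I I] b <= 1] says they are
    disjoint and the cardinality constraints say they are nonempty.  The entry
    of [L 1_S] at [j \in S] is [|N_j \ S|], and at [j \notin S] it is
    [-|N_j :&: S| <= 0], so [L 1_S <= t] says that no vertex of [S] has more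
    than [t] in-neighbours outside [S].  Since [D] is [r_max]-robust, every
    feasible pair has a member reachable for [r_max], forcing [t >= r_max];
    since [D] is not [(r_max + 1)]-robust, some pair of nonempty disjoint sets
    has no [(r_max + 1)]-reachable member, and it is feasible with
    [t = r_max]. *)

From HB Require Import structures.
From mathcomp Require Import all_boot all_order all_algebra ring zify.
Import Order.TTheory GRing.Theory Num.Theory.
Local Open Scope ring_scope.

Definition indicator (R : pzRingType) {n : nat} (S : {set 'I_n}) : 'cV[R]_n :=
  \col_i (i \in S)%:R.

Lemma sumr_nat_pred (R : pzSemiRingType) (T : finType) (P : pred T) :
  \sum_i ((P i)%:R : R) = #|P|%:R.
Proof.
rewrite -sum1_card natr_sum [RHS]big_mkcond; apply: eq_bigr => i _.
by rewrite unfold_in; case: (P i).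
Qed.

Lemma map_indicator (R : pzRingType) (n : nat) (S : {set 'I_n}) :
  map_mx intr (indicator int S) = indicator R S.
Proof. by apply/matrixP => i j; rewrite !mxE; case: (i \in S). Qed.

Lemma sum_indicator (n : nat) (S : {set 'I_n}) :
  ((const_mx 1 : 'rV[int]_n) *m indicator int S) 0 0 = #|S|%:R.
Proof. by rewrite mxE -sumr_nat_pred; apply: eq_bigr => i _; rewrite !mxE mul1r. Qed.

Lemma bool_col_indicator (n : nat) (b : 'cV[int]_n) :
  (forall i, 0 <= b i 0 <= 1) -> b = indicator int [set i | b i 0 == 1].
Proof.
move=> b01; apply/matrixP => i j; rewrite ord1 !mxE inE.
by have := b01 i; case: eqP => [->//|]; lia.
Qed.

Section LaplacianIndicator.

Context {R : realFieldType} {n : nat} (e : rel 'I_n).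
Hypothesis e_irr : simple_digraph e.

Lemma laplacian_indicatorE (S : {set 'I_n}) (j : 'I_n) :
  (laplacian R e *m indicator R S) j 0 =
    (j \in S)%:R * #|in_nbrs e j|%:R - #|in_nbrs e j :&: S|%:R.
Proof.
rewrite mxE.
transitivity (\sum_i ((i == j)%:R * ((j \in S)%:R * #|in_nbrs e j|%:R)
    - ((i \in in_nbrs e j :&: S)%:R : R))).
  apply: eq_bigr => i _; rewrite !mxE in_setI inE.
  case: eqP => [->|_]; first by rewrite (negbTE (e_irr j)); case: (j \in S) => /=; ring.
  by case: (e i j); case: (i \in S) => /=; ring.
by rewrite sumrB -mulr_suml !sumr_nat_pred (@eq_card1 _ j) ?mul1r.
Qed.

Lemma laplacian_indicator_in (S : {set 'I_n}) (j : 'I_n) :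
  j \in S -> (laplacian R e *m indicator R S) j 0 = #|in_nbrs e j :\: S|%:R.
Proof.
move=> jS; rewrite laplacian_indicatorE jS mul1r.
by rewrite -(cardsID S (in_nbrs e j)) natrD addrC addKr.
Qed.

Lemma laplacian_indicator_out {S : {set 'I_n}} {j : 'I_n} :
  j \notin S -> (laplacian R e *m indicator R S) j 0 <= 0.
Proof.
by move=> /negbTE jS; rewrite laplacian_indicatorE jS mul0r sub0r oppr_le0.
Qed.

Lemma reachable_laplacian_bound (S : {set 'I_n}) (r : nat) (t : R) :
  (forall j, (laplacian R e *m indicator R S) j 0 <= t) ->
  r_reachable e r S -> r%:R <= t.
Proof.
move=> LSt /andP[_ /existsP[i /andP[iS ri]]].
by apply: le_trans (LSt i); rewrite laplacian_indicator_in // ler_nat.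
Qed.

Lemma unreachable_laplacian_bound (S : {set 'I_n}) (r : nat) :
  ~~ r_reachable e r.+1 S ->
  forall j, (laplacian R e *m indicator R S) j 0 <= r%:R.
Proof.
move=> unreachS j; have [jS|jS] := boolP (j \in S).
  rewrite laplacian_indicator_in // ler_nat leqNgt; apply: contra unreachS => rj.
  rewrite /r_reachable; apply/andP; split; first by apply/set0Pn; exists j.
  by apply/existsP; exists j; rewrite jS.
exact: (le_trans (laplacian_indicator_out jS) (ler0n _ r)).
Qed.

End LaplacianIndicator.

Section MaximalRobustness.

Context {n : nat} (e : rel 'I_n).
Hypothesis n_ge2 : (2 <= n)%N.

Lemma r_robust0 : r_robust e 0.
Proof.
apply/forallP => S1; apply/forallP => S2.
apply/implyP => /and3P[S1n0 _ _]; apply/orP; left.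
rewrite /r_reachable S1n0; have /set0Pn[x xS1] := S1n0.
by apply/existsP; exists x; rewrite xS1.
Qed.

(* Two distinct singletons: each vertex has at most [n - 1] in-neighbours. *)
Lemma r_robust_ltn {r : nat} : r_robust e r -> (r < n)%N.
Proof.
have [n0 n1] : (0 < n)%N /\ (1 < n)%N by lia.
move/forallP/(_ [set Ordinal n0])/forallP/(_ [set Ordinal n1]).
rewrite -!card_gt0 !cards1 disjoints1 inE /=.
have reach1 (x : 'I_n) : r_reachable e r [set x] -> (r < n)%N.
  move=> /andP[_ /existsP[i /andP[_ ri]]].
  have : (#|in_nbrs e i :\: [set x]| <= #|[set~ x]|)%N.
    by apply: subset_leq_card; rewrite setDE subsetIr.
  by rewrite cardsC1 card_ord; lia.
by case/orP; apply: reach1.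
Qed.

Lemma r_robust_rmax : r_robust e (r_max e).
Proof.
apply: (big_ind (r_robust e)) => //; first exact: r_robust0.
by move=> x y rx ry; rewrite /maxn; case: ifP.
Qed.

Lemma leq_rmax {r : nat} : r_robust e r -> (r <= r_max e)%N.
Proof.
move=> robust_r; have r_lt : (r < n.+1)%N by have := r_robust_ltn robust_r; lia.
by rewrite /r_max (leq_bigmax_cond (F := @nat_of_ord _) (Ordinal r_lt)).
Qed.

Lemma not_r_robust_rmaxS : ~~ r_robust e (r_max e).+1.
Proof. by apply/negP => /leq_rmax; rewrite ltnn. Qed.

End MaximalRobustness.

Lemma not_r_robustP {n : nat} {e : rel 'I_n} {r : nat} :
  ~~ r_robust e r ->
  exists S1 S2 : {set 'I_n}, [/\ S1 != set0, S2 != set0, [disjoint S1 & S2],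
    ~~ r_reachable e r S1 & ~~ r_reachable e r S2].
Proof.
rewrite negb_forall => /existsP[S1]; rewrite negb_forall => /existsP[S2].
rewrite negb_imply => /andP[/and3P[S1n0 S2n0 dis] /norP[unreach1 unreach2]].
by exists S1, S2.
Qed.

Section MILP.

Context {R : realFieldType} {n : nat} (e : rel 'I_n).

Lemma block_laplacian_col (x y : 'cV[int]_n) :
  block_mx (laplacian R e) 0 0 (laplacian R e) *m map_mx intr (col_mx x y) =
  col_mx (laplacian R e *m map_mx intr x) (laplacian R e *m map_mx intr y).
Proof. by rewrite map_col_mx mul_block_col !mul0mx addr0 add0r. Qed.

Lemma milp_feasible_indicator (t : R) (S1 S2 : {set 'I_n}) :
  S1 != set0 -> S2 != set0 -> [disjoint S1 & S2] -> 0 <= t ->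
  (forall j, (laplacian R e *m indicator R S1) j 0 <= t) ->
  (forall j, (laplacian R e *m indicator R S2) j 0 <= t) ->
  milp_feasible e t (col_mx (indicator int S1) (indicator int S2)).
Proof.
move=> S1n0 S2n0 dis t_ge0 LS1t LS2t; split => //.
- move=> i; rewrite block_laplacian_col !map_indicator.
  by case: (split_ordP i) => k ->; rewrite ?col_mxEu ?col_mxEd.
- move=> i; case: (split_ordP i) => k ->; rewrite ?col_mxEu ?col_mxEd mxE.
    by case: (k \in S1).
  by case: (k \in S2).
- move=> i; rewrite mul_row_col !mul1mx !mxE.
  by case S1i: (i \in S1); rewrite ?(disjointFr dis S1i); case: (i \in S2).
- rewrite !mul_row_col !mul0mx addr0 add0r !sum_indicator !natz !lez_nat.
  have cardU : (#|S1| + #|S2| <= n)%N.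
    rewrite -cardsUI (disjoint_setI0 dis) cards0 addn0.
    by rewrite -[X in (_ <= X)%N](card_ord n) max_card.
  move: S1n0 S2n0; rewrite -!card_gt0 => S1n0 S2n0.
  by split; apply/andP; split; lia.
Qed.

Lemma milp_feasible_sets (t : R) (b : 'cV[int]_(n + n)) :
  milp_feasible e t b ->
  exists S1 S2 : {set 'I_n}, [/\ S1 != set0, S2 != set0, [disjoint S1 & S2],
    forall j, (laplacian R e *m indicator R S1) j 0 <= t &
    forall j, (laplacian R e *m indicator R S2) j 0 <= t].
Proof.
move=> [_ Lbt b01 sum_le1 [/andP[card1_ge1 _] /andP[card2_ge1 _]]].
pose S1 := [set i | usubmx b i 0 == 1]; pose S2 := [set i | dsubmx b i 0 == 1].
have b_ind : b = col_mx (indicator int S1) (indicator int S2).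
  by rewrite -[b](vsubmxK b); congr col_mx; apply: bool_col_indicator => i; rewrite mxE.
move: Lbt sum_le1 card1_ge1 card2_ge1; rewrite {}b_ind block_laplacian_col !map_indicator.
rewrite !mul_row_col !mul0mx addr0 add0r !sum_indicator !natz !lez_nat !card_gt0.
move=> Lbt sum_le1 S1n0 S2n0.
exists S1, S2; split => //.
- apply/pred0P => k /=; apply/negbTE/negP => /andP[k1 k2].
  by have := sum_le1 k; rewrite !mul1mx !mxE k1 k2.
- by move=> j; have := Lbt (lshift n j); rewrite col_mxEu.
- by move=> j; have := Lbt (rshift n j); rewrite col_mxEd.
Qed.

End MILP.

Theorem corollary1 (R : realFieldType) (n : nat) (e : rel 'I_n)
    (hn : (2 <= n)%N) (hsimple : simple_digraph e) :
  (exists b : 'cV[int]_(n + n), milp_feasible e ((r_max e)%:R : R) b) /\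
  (forall (t : R) (b : 'cV[int]_(n + n)), milp_feasible e t b -> (r_max e)%:R <= t).
Proof.
split.
- have [S1 [S2 [S1n0 S2n0 dis unreach1 unreach2]]] :=
    not_r_robustP (not_r_robust_rmaxS e hn).
  exists (col_mx (indicator int S1) (indicator int S2)).
  by apply: milp_feasible_indicator; rewrite ?ler0n //;
    apply: unreachable_laplacian_bound.
- move=> t b /milp_feasible_sets[S1 [S2 [S1n0 S2n0 dis LS1t LS2t]]].
  have := r_robust_rmax e; move/forallP/(_ S1)/forallP/(_ S2).
  rewrite S1n0 S2n0 dis /= => /orP[reach1|reach2].
  + exact: reachable_laplacian_bound LS1t reach1.
  + exact: reachable_laplacian_bound LS2t reach2.
Qed.
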